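(* For $D \in \mathbb{R}^{m\times n}$, $Q \in \mathbb{Z}^{m\times n}$ whose $j$th column stores the sorting of the $j$th column of $D$, and a sequence $(a_1,\ldots,a_p)$ with $a_k\in\{0,\ldots,n-1\}$, QuickLexSort$(D,Q,(a_1,\ldots,a_p))$ runs in time $O(mp)$ and space $O(mn)$.
   Context: ''The $j$th column of $Q$ stores the sorting of the $j$th column of $D$'' means $(Q_{0j},\ldots,Q_{m-1,j})$ is a permutation of $\{0,\ldots,m-1\}$ with $D_{Q_{0j},j} \le \cdots \le D_{Q_{m-1,j},j}$. The model is a unit-cost random access machine (entry access, comparison of reals, integer arithmetic in constant time); space includes the inputs $D$ and $Q$. QuickLexSortRefine$(D,Q,i,L)$: initialize integer arrays $\mathrm{IDval},\mathrm{IDvalInit},\mathrm{subID},\mathrm{newCount},\mathrm{numNewID}$ of length $m$ to zero. For $j=0,\ldots,m-1$: let $r := Q[j,i]$, $\ell := L[r]$; if $\mathrm{IDvalInit}[\ell]=0$, set $\mathrm{IDvalInit}[\ell]:=1$, $\mathrm{IDval}[\ell]:=D[r,i]$; otherwise if $\mathrm{IDval}[\ell]\neq D[r,i]$, set $\mathrm{IDval}[\ell]:=D[r,i]$ and increment $\mathrm{newCount}[\ell]$; then set $\mathrm{subID}[r]:=\mathrm{newCount}[\ell]$. Set $\mathrm{numNewID}[m-1]:=\sum_{j=0}^{m-2}\mathrm{newCount}[j]$ and for $j=m-2,\ldots,1$, $\mathrm{numNewID}[j]:=\mathrm{numNewID}[j+1]-\mathrm{newCount}[j]$. Return $L'$ with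 $L'[j]:=L[j]+\mathrm{numNewID}[L[j]]+\mathrm{subID}[j]$. QuickLexSort$(D,Q,(a_1,\ldots,a_p))$: set $L'$ to the zero vector of length $m$; for $k=1,\ldots,p$ in order, set $L' :=$ QuickLexSortRefine$(D,Q,a_k,L')$; return $L'$. *)

(* Unit-cost RAM model rendered as an explicit cost monad. *)
From mathcomp Require Import all_boot all_order all_algebra.
From mathcomp Require Import reals.
Set Implicit Arguments. Unset Strict Implicit. Unset Printing Implicit Defensive.
Import Order.TTheory GRing.Theory Num.Theory.
Local Open Scope ring_scope.

(* ---------- Cost monad: time = number of unit-cost primitive steps;
   space = peak number of live memory cells (inputs D and Q included). ---- *)
Record cstate := CState { c_time : nat; c_live : nat; c_peak : nat }.
Definition CM (A : Type) := cstate -> A * cstate.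

Definition cret {A} (x : A) : CM A := fun s => (x, s).
Definition cbind {A B} (m : CM A) (k : A -> CM B) : CM B :=
  fun s => let (x, s') := m s in k x s'.
Notation "x <- m ;; k" := (cbind m (fun x => k))
  (at level 61, m at next level, right associativity).
Notation "m ;;; k" := (cbind m (fun _ => k))
  (at level 61, right associativity).

(* one unit-cost step (comparison, integer arithmetic, control) *)
Definition tick : CM unit :=
  fun s => (tt, CState (c_time s).+1 (c_live s) (c_peak s)).
Definition alloc (k : nat) : CM unit :=
  fun s => (tt, CState (c_time s + k) (c_live s + k)
                       (maxn (c_peak s) (c_live s + k))).
Definition release (k : nat) : CM unit :=
  fun s => (tt, CState (c_time s).+1 (c_live s - k)%N (c_peak s)).

Definition newArr {T} (x0 : T) (k : nat) : CM (seq T) :=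
  alloc k ;;; cret (nseq k x0).
Definition rd {T} (x0 : T) (a : seq T) (i : nat) : CM T :=
  tick ;;; cret (nth x0 a i).
Definition wr {T} (x0 : T) (a : seq T) (i : nat) (x : T) : CM (seq T) :=
  tick ;;; cret (set_nth x0 a i x).

Definition mget {T} {m n} (A : 'M[T]_(m, n)) (x0 : T) (r c : nat) : T :=
  match insub r, insub c with
  | Some i, Some j => A i j
  | _, _ => x0
  end.
Definition rdM {T} {m n} (A : 'M[T]_(m, n)) (x0 : T) (r c : nat) : CM T :=
  tick ;;; cret (mget A x0 r c).

Fixpoint cfor {S} (lo cnt : nat) (body : nat -> S -> CM S) (st : S) : CM S :=
  match cnt with
  | 0 => tick ;;; cret st
  | c.+1 => tick ;;; (st' <- body lo st ;; cfor lo.+1 c body st')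
  end.

Definition QuickLexSortRefine (R : realType) (m n : nat)
    (D : 'M[R]_(m, n)) (Q : 'M[nat]_(m, n)) (i : nat) (L : seq nat)
  : CM (seq nat) :=
  IDval <- newArr (0 : R) m ;;
  IDvalInit <- newArr 0%N m ;;
  subID <- newArr 0%N m ;;
  newCount <- newArr 0%N m ;;
  numNewID <- newArr 0%N m ;;
  st <- cfor 0 m (fun j st =>
      let: (IDval, IDvalInit, subID, newCount) := st in
      r <- rdM Q 0%N j i ;;
      l <- rd 0%N L r ;;
      ini <- rd 0%N IDvalInit l ;;
      tick ;;;
      st2 <- (if ini == 0%N then
               IDvalInit' <- wr 0%N IDvalInit l 1%N ;;
               d <- rdM D 0 r i ;;
               IDval' <- wr 0 IDval l d ;;
               cret (IDval', IDvalInit', newCount)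
             else
               v <- rd 0 IDval l ;;
               d <- rdM D 0 r i ;;
               tick ;;;
               (if v != d then
                  IDval' <- wr 0 IDval l d ;;
                  c <- rd 0%N newCount l ;;
                  tick ;;;
                  newCount' <- wr 0%N newCount l c.+1 ;;
                  cret (IDval', IDvalInit, newCount')
                else cret (IDval, IDvalInit, newCount))) ;;
      let: (IDval2, IDvalInit2, newCount2) := st2 in
      c <- rd 0%N newCount2 l ;;
      subID' <- wr 0%N subID r c ;;
      cret (IDval2, IDvalInit2, subID', newCount2))
    (IDval, IDvalInit, subID, newCount) ;;
  let: (IDval, IDvalInit, subID, newCount) := st in
  tot <- cfor 0 m.-1 (fun j acc =>
           c <- rd 0%N newCount j ;; tick ;;; cret (acc + c)%N) 0%N ;;
  numNewID <- wr 0%N numNewID m.-1 tot ;;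
  numNewID <- cfor 0 (m - 2)%N (fun k nn =>
           let j := (m - 2 - k)%N in
           a <- rd 0%N nn j.+1 ;;
           b <- rd 0%N newCount j ;;
           tick ;;;
           wr 0%N nn j (a - b)%N) numNewID ;;
  L' <- newArr 0%N m ;;
  L' <- cfor 0 m (fun j L' =>
           lj <- rd 0%N L j ;;
           nn <- rd 0%N numNewID lj ;;
           sj <- rd 0%N subID j ;;
           tick ;;; tick ;;;
           wr 0%N L' j (lj + nn + sj)%N) L' ;;
  release (5 * m) ;;;
  cret L'.

Fixpoint cforeach {S} (s : seq nat) (body : nat -> S -> CM S) (st : S)
  : CM S :=
  match s with
  | [::] => tick ;;; cret st
  | x :: s' => tick ;;; (st' <- body x st ;; cforeach s' body st')
  end.

Definition QuickLexSort (R : realType) (m n : nat)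
    (D : 'M[R]_(m, n)) (Q : 'M[nat]_(m, n)) (a : seq nat) : CM (seq nat) :=
  L0 <- newArr 0%N m ;;
  cforeach a (fun ak L =>
      L' <- QuickLexSortRefine D Q ak L ;;
      release m ;;;          (* the previous L is discarded *)
      cret L') L0.

(* Initial machine state: the inputs D and Q (2mn cells) are in memory. *)
Definition init_state (m n : nat) : cstate := CState 0 (2 * (m * n)) (2 * (m * n)).

Definition run_time {A} (c : CM A) (s0 : cstate) : nat := c_time (c s0).2.
Definition run_space {A} (c : CM A) (s0 : cstate) : nat := c_peak (c s0).2.

Definition stores_column_sorting (R : realType) (m n : nat)
    (D : 'M[R]_(m, n)) (Q : 'M[nat]_(m, n)) : Prop :=
  forall j : 'I_n,
    perm_eq [seq Q r j | r <- enum 'I_m] (iota 0 m) /\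
    sorted <=%R [seq mget D 0 (Q r j) j | r <- enum 'I_m].

From mathcomp Require Import all_boot all_order all_algebra.
From mathcomp Require Import reals.
From mathcomp Require Import zify.

(* Every primitive step has a time cost and a memory footprint that do not
   depend on the values it handles, and the number of live cells evolves
   deterministically.  Hence costs compose along the program text: one
   refinement pass takes O(m) steps and O(m) extra cells, p passes take O(mp)
   steps, and the peak stays within the 2mn input cells plus O(m) <= O(mn)
   working cells. *)

Definition costs {A} (c : CM A) (T P b b' : nat) : Prop :=
  forall s, c_live s = b ->
    let s' := (c s).2 in
    [/\ (c_time s' <= c_time s + T)%N, c_live s' = b' &
        (c_peak s' <= maxn (c_peak s) P)%N].

Section CostRules.

Context {A : Type}.

Lemma costs_bind {B} (c : CM A) (k : A -> CM B) T1 T2 P1 P2 b b1 b2 :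
  costs c T1 P1 b b1 -> (forall x, costs (k x) T2 P2 b1 b2) ->
  costs (cbind c k) (T1 + T2) (maxn P1 P2) b b2.
Proof.
move=> Hc Hk s Hs; rewrite /cbind.
have [t1 l1 p1] := Hc s Hs.
case E: (c s) => [x s1] in t1 l1 p1 *; rewrite /= in t1 l1 p1 *.
have [t2 l2 p2] := Hk x s1 l1.
split => //; lia.
Qed.

Lemma costs_if (cond : bool) (c1 c2 : CM A) T1 T2 P1 P2 b b' :
  costs c1 T1 P1 b b' -> costs c2 T2 P2 b b' ->
  costs (if cond then c1 else c2) (maxn T1 T2) (maxn P1 P2) b b'.
Proof.
move=> H1 H2 s Hs; case: cond.
- by have [? ? ?] := H1 s Hs; split => //; lia.
- by have [? ? ?] := H2 s Hs; split => //; lia.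
Qed.

Lemma costs_le (c : CM A) T P T' P' b b1 b2 :
  costs c T P b b1 -> (T <= T')%N -> (P <= P')%N -> b1 = b2 ->
  costs c T' P' b b2.
Proof. by move=> H hT hP <- s Hs; have [? ? ?] := H s Hs; split => //; lia. Qed.

Lemma costs_cret (x : A) b : costs (cret x) 0 0 b b.
Proof. by move=> s Hs; split => //=; lia. Qed.

Lemma costs_newArr (x0 : A) k b : costs (newArr x0 k) k (b + k) b (b + k).
Proof. by move=> s <-; split => //=; lia. Qed.

Lemma costs_rd (x0 : A) a i b : costs (rd x0 a i) 1 0 b b.
Proof. by move=> s Hs; split => //=; lia. Qed.

Lemma costs_wr (x0 : A) a i x b : costs (wr x0 a i x) 1 0 b b.
Proof. by move=> s Hs; split => //=; lia. Qed.

Lemma costs_rdM m n (M : 'M[A]_(m, n)) x0 r c b : costs (rdM M x0 r c) 1 0 b b.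
Proof. by move=> s Hs; split => //=; lia. Qed.

End CostRules.

Lemma costs_tick b : costs tick 1 0 b b.
Proof. by move=> s Hs; split => //=; lia. Qed.

Lemma costs_alloc k b : costs (alloc k) k (b + k) b (b + k).
Proof. by move=> s <-; split => //=; lia. Qed.

Lemma costs_release k b : costs (release k) 1 0 b (b - k).
Proof. by move=> s <-; split => //=; lia. Qed.

Section CostLoops.

Context {S : Type} (T P b : nat).

Lemma costs_cfor lo cnt (body : nat -> S -> CM S) st :
  (forall j st, costs (body j st) T P b b) ->
  costs (cfor lo cnt body st) (cnt * (T + 1) + 1) P b b.
Proof.
move=> Hbody; elim: cnt lo st => [|cnt IH] lo st /=.
  by apply: costs_le (costs_tick b) _ _ _ => //; lia.
apply: costs_le.
- apply: costs_bind; [exact: costs_tick | move=> _].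
  by apply: costs_bind; [exact: Hbody | move=> st'; exact: IH].
- lia.
- lia.
- by [].
Qed.

Lemma costs_cforeach (s : seq nat) (body : nat -> S -> CM S) st :
  (forall j st, costs (body j st) T P b b) ->
  costs (cforeach s body st) (size s * (T + 1) + 1) P b b.
Proof.
move=> Hbody; elim: s st => [|x s IH] st /=.
  by apply: costs_le (costs_tick b) _ _ _ => //; lia.
apply: costs_le.
- apply: costs_bind; [exact: costs_tick | move=> _].
  by apply: costs_bind; [exact: Hbody | move=> st'; exact: IH].
- lia.
- lia.
- by [].
Qed.

End CostLoops.

(* Splits tuple-valued loop states so that the [let: (_, _) := st] matches in
   the program text reduce. *)
Ltac split_tuple x :=
  lazymatch type of x with
  | prod _ _ => let x1 := fresh "x" in let x2 := fresh "x" in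
                destruct x as [x1 x2]; split_tuple x1
  | _ => idtac
  end.

(* Derives a cost judgment syntactically, leaving the time, peak and live-cell
   bounds as evars to be solved by arithmetic afterwards. *)
Ltac costs_syntax :=
  cbv beta iota zeta;
  lazymatch goal with
  | |- costs (cbind _ _) _ _ _ _ =>
      eapply costs_bind;
      [costs_syntax | let x := fresh "x" in intro x; split_tuple x; costs_syntax]
  | |- costs (if _ then _ else _) _ _ _ _ =>
      eapply costs_if; [costs_syntax | costs_syntax]
  | |- costs (cfor _ _ _ _) _ _ _ _ =>
      eapply costs_cfor; let j := fresh "j" in let x := fresh "x" in
      intros j x; split_tuple x; costs_syntax
  | |- costs tick _ _ _ _ => eapply costs_tick
  | |- costs (cret _) _ _ _ _ => eapply costs_cret
  | |- costs (alloc _) _ _ _ _ => eapply costs_alloc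
  | |- costs (release _) _ _ _ _ => eapply costs_release
  | |- costs (newArr _ _) _ _ _ _ => eapply costs_newArr
  | |- costs (rd _ _ _) _ _ _ _ => eapply costs_rd
  | |- costs (wr _ _ _ _) _ _ _ _ => eapply costs_wr
  | |- costs (rdM _ _ _ _) _ _ _ _ => eapply costs_rdM
  end.

Lemma costs_QuickLexSortRefine {R : realType} {m n : nat} (D : 'M[R]_(m, n))
    (Q : 'M[nat]_(m, n)) i L b :
  costs (QuickLexSortRefine D Q i L) (100 * m + 100) (b + 6 * m) b (b + m).
Proof.
rewrite /QuickLexSortRefine; eapply costs_le; [costs_syntax | | |].
- have : (m.-1 <= m)%N by lia.
  have : (m - 2 <= m)%N by lia.
  rewrite ?maxn0 ?max0n /=; nia.
- by rewrite ?maxn0 ?max0n; repeat (apply/leq_maxl/andP; split); lia.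
- lia.
Qed.

Lemma costs_QuickLexSort {R : realType} {m n : nat} (D : 'M[R]_(m, n))
    (Q : 'M[nat]_(m, n)) a b :
  costs (QuickLexSort D Q a) (m + (size a * (100 * m + 103) + 1))
        (b + 7 * m) b (b + m).
Proof.
rewrite /QuickLexSort; apply: costs_le.
- apply: costs_bind; [exact: costs_newArr | move=> L0].
  apply: costs_cforeach => ak L.
  apply: costs_le.
  + apply: costs_bind; [exact: costs_QuickLexSortRefine | move=> L'].
    apply: costs_bind; [exact: costs_release | move=> _; exact: costs_cret].
  + exact: leqnn.
  + exact: leqnn.
  + lia.
- lia.
- rewrite ?maxn0; lia.
- by [].
Qed.

Theorem mainTheorem5 :
  exists C : nat,
    forall (R : realType) (m n : nat) (D : 'M[R]_(m, n)) (Q : 'M[nat]_(m, n))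
           (a : seq nat),
      (1 <= m)%N -> (1 <= size a)%N ->
      all (fun ak => ak < n)%N a ->
      stores_column_sorting D Q ->
      (run_time (QuickLexSort D Q a) (init_state m n) <= C * (m * size a))%N /\
      (run_space (QuickLexSort D Q a) (init_state m n) <= C * (m * n))%N.
Proof.
(* The cost bounds hold for arbitrary [Q]; the sorting hypothesis is only
   needed for the correctness of the output. *)
exists 300 => R m n D Q a m_gt0 a_gt0 a_lt_n _.
have n_gt0 : (0 < n)%N.
  by case: a a_gt0 a_lt_n => [|x a] //= _ /andP [x_lt_n _]; lia.
have [time_le _ peak_le] :=
  costs_QuickLexSort D Q a _ (init_state m n) erefl.
rewrite /run_time /run_space; split.
- apply: leq_trans time_le _ => /=.
  have : (0 < m * size a)%N by rewrite muln_gt0 m_gt0 a_gt0.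
  nia.
- apply: leq_trans peak_le _ => /=.
  have : (0 < m * n)%N by rewrite muln_gt0 m_gt0 n_gt0.
  nia.
Qed.
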